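(* Let $p_1<\dots<p_m$ be real numbers with $m\ge3$, let $\mu=\min_{i\ne j}|p_i-p_j|$, and define $\mu_0^2=\big[\sum_{1\le i<j\le m}(p_i-p_j)^{-2}\big]^{-1}$ and $\mu_{k+1}^2=\big(\sum_{1\le i<j\le m}\frac{1}{(p_i-p_j)^2-\mu_{k}^2}\big)^{-1}+\mu_{k}^2$ for $k\ge0$. Then for every $k\ge0$, $$0<\Big[\frac{m-1}{\mu^2/\mu_k^2-1}+\frac34 m\Big]^{-1}<\frac{\mu_{k+1}^2}{\mu_k^2}-1<\frac{\mu^2}{\mu_k^2}-1.$$ *)

From mathcomp Require Import all_boot all_order all_algebra.
Set Implicit Arguments. Unset Strict Implicit. Unset Printing Implicit Defensive.
Import Order.TTheory GRing.Theory Num.Theory.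
Local Open Scope ring_scope.

Definition pairsum (R : realFieldType) (m : nat) (f : 'I_m -> 'I_m -> R) : R :=
  \sum_(i < m) \sum_(j < m | (i < j)%N) f i j.

Fixpoint muk2 (R : realFieldType) (m : nat) (p : 'I_m -> R) (k : nat) : R :=
  match k with
  | 0 => (pairsum (fun i j => ((p i - p j) ^+ 2)^-1))^-1
  | k'.+1 => let a := muk2 p k' in
             (pairsum (fun i j => ((p i - p j) ^+ 2 - a)^-1))^-1 + a
  end.

From mathcomp Require Import all_boot all_order all_algebra.
From mathcomp Require Import ring lra.
Set Implicit Arguments.
Unset Strict Implicit.
Unset Printing Implicit Defensive.

Import Order.TTheory GRing.Theory Num.Theory.
Local Open Scope ring_scope.

(* Write [S(a) = \sum_(i < j) ((p_i - p_j)^2 - a)^-1], so that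
   [mu_(k+1)^2 / mu_k^2 - 1 = (S(mu_k^2) mu_k^2)^-1].  The closest pair contributes
   exactly [(mu^2 - a)^-1] to [S(a)] and, as [m >= 3], some other positive term
   remains; hence [S(a) > (mu^2 - a)^-1], which is the upper bound and, by
   induction, keeps [0 < mu_k^2 < mu^2].  For the lower bound, consecutive points
   are at least [mu] apart, so [|p_(i+r) - p_i| >= r mu > r sqrt a] and the term of
   distance [r >= 2] is at most [((r^2 - 1) a)^-1]; as [\sum_(r >= 2) (r^2 - 1)^-1]
   telescopes to [3/4], every row of [S(a)] is at most [(mu^2 - a)^-1 + 3/(4a)],
   and the last row is empty. *)

Lemma sum_inv_sqr_sub1_le (R : realFieldType) (N : nat) :
  \sum_(2 <= r < N) ((r%:R : R) ^+ 2 - 1)^-1 <= 3 / 4.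
Proof.
have [N_le2|N_gt2] := leqP N 2; first by rewrite big_geq //; lra.
pose f (r : nat) : R := - ((r.-1)%:R^-1 + r%:R^-1) / 2.
rewrite (@telescope_sumr_eq _ _ _ f) ?(ltnW N_gt2) //; last first.
  case=> [|[|r]] //= _; rewrite /f /=.
  have r_ge0 : 0 <= r%:R :> R by [].
  rewrite -[r.+2%:R]natr1 -[r.+1%:R]natr1.
  by field; apply/and4P; split; apply/eqP; nra.
have fN : f N <= 0.
  have : 0 <= (N.-1)%:R^-1 + N%:R^-1 :> R by rewrite addr_ge0 ?invr_ge0.
  rewrite /f; lra.
rewrite /f /= invr1 in fN *; lra.
Qed.

Lemma ler_inv_sqr_sub (R : realFieldType) (s d a : R) :
  0 <= s -> s <= d -> a < s ^+ 2 -> (d ^+ 2 - a)^-1 <= (s ^+ 2 - a)^-1.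
Proof.
move=> s_ge0 s_le_d a_lt; have s2_le : s ^+ 2 <= d ^+ 2 by nra.
by rewrite lef_pV2 ?posrE ?subr_gt0 ?lerD2r // (lt_le_trans a_lt).
Qed.

(* With [a = mu_k^2], [b = mu^2] and [S = S(mu_k^2)], the middle quantity is
   [mu_(k+1)^2 / mu_k^2 - 1 = (S a)^-1]. *)
Lemma ratio_bounds (R : realFieldType) (a b S N K : R) :
  0 < a -> a < b -> 0 <= N -> 0 < K ->
  (b - a)^-1 < S -> S < N / (b - a) + K / a ->
  0 < (N / (b / a - 1) + K)^-1 /\
  (N / (b / a - 1) + K)^-1 < (S^-1 + a) / a - 1 /\
  (S^-1 + a) / a - 1 < b / a - 1.
Proof.
move=> a_gt0 a_lt_b N_ge0 K_gt0 S_gt S_lt.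
have ba_gt0 : 0 < b - a by rewrite subr_gt0.
have S_gt0 : 0 < S by apply: lt_trans S_gt; rewrite invr_gt0.
have -> : N / (b / a - 1) + K = (N / (b - a) + K / a) * a.
  by field; rewrite !gt_eqF.
have -> : (S^-1 + a) / a - 1 = (S * a)^-1 by field; rewrite !gt_eqF.
have -> : b / a - 1 = ((b - a)^-1 * a)^-1 by field; rewrite !gt_eqF.
have X_gt0 : 0 < N / (b - a) + K / a.
  have : 0 <= N / (b - a) by rewrite divr_ge0 // ltW.
  have : 0 < K / a by rewrite divr_gt0.
  lra.
split; first by rewrite invr_gt0 mulr_gt0.
by rewrite !ltf_pV2 ?posrE ?mulr_gt0 ?invr_gt0 // !ltr_pM2r.
Qed.

Section SpacedSequence.

Variables (R : realFieldType) (M : nat) (q : nat -> R) (mu a : R).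
Hypothesis mu_ge0 : 0 <= mu.
Hypothesis q_gap : forall k, (k.+1 < M)%N -> mu <= q k.+1 - q k.
Hypotheses (a_gt0 : 0 < a) (a_lt_mu2 : a < mu ^+ 2).

Lemma spacing_ge i j : (i <= j)%N -> (j < M)%N -> (j - i)%:R * mu <= q j - q i.
Proof.
elim: j => [|j IHj] le_ij j_lt.
  by move: le_ij; rewrite leqn0 => /eqP ->; rewrite subrr mul0r.
have [->|ne_ij] := eqVneq i j.+1; first by rewrite subnn subrr mul0r.
have {}le_ij : (i <= j)%N by rewrite -ltnS ltn_neqAle ne_ij le_ij.
have := IHj le_ij (ltnW j_lt); have := q_gap j_lt.
rewrite subSn // -natr1 mulrDl mul1r; lra.
Qed.

Lemma inv_gap_next_le i : (i.+1 < M)%N ->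
  ((q i - q i.+1) ^+ 2 - a)^-1 <= (mu ^+ 2 - a)^-1.
Proof.
by move=> i_lt; rewrite -sqrrN opprB ler_inv_sqr_sub // q_gap.
Qed.

Lemma inv_gap_far_le i r : (2 <= r)%N -> (i + r < M)%N ->
  ((q i - q (i + r)) ^+ 2 - a)^-1 <= a^-1 * ((r%:R ^+ 2 - 1)^-1).
Proof.
move=> r_ge2 lt_M.
have r2 : 2 <= r%:R :> R by rewrite (ler_nat _ 2).
have spaced : r%:R * mu <= q (i + r) - q i.
  by have := spacing_ge (leq_addr r i) lt_M; rewrite addnC addnK.
have r2a_le : r%:R ^+ 2 * a <= (r%:R * mu) ^+ 2.
  by rewrite exprMn ler_wpM2l ?sqr_ge0 ?ltW.
have r2_gt1 : 1 < r%:R ^+ 2 :> R by nra.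
have a_lt : a < (r%:R * mu) ^+ 2.
  by apply: lt_le_trans r2a_le; rewrite ltr_pMl.
rewrite -sqrrN opprB; apply: le_trans (ler_inv_sqr_sub _ spaced a_lt) _.
  by rewrite mulr_ge0.
rewrite -invfM lef_pV2 ?posrE ?subr_gt0 ?mulr_gt0 ?subr_gt0 //; lra.
Qed.

Lemma inv_gap_row_sum_le i : (i.+1 < M)%N ->
  \sum_(i.+1 <= j < M) ((q i - q j) ^+ 2 - a)^-1 <= (mu ^+ 2 - a)^-1 + 3 / 4 / a.
Proof.
move=> i_lt; rewrite big_ltn // lerD ?inv_gap_next_le //.
rewrite -[i.+2]add2n big_addn.
apply: le_trans (_ : \sum_(2 <= r < M - i) a^-1 * (r%:R ^+ 2 - 1)^-1 <= _).
  apply: ler_sum_nat => r /andP [r_ge2 r_lt]; rewrite addnC inv_gap_far_le //.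
  by rewrite -ltn_subRL.
rewrite -mulr_sumr mulrC ler_pM2r ?invr_gt0 //; exact: sum_inv_sqr_sub1_le.
Qed.

Lemma inv_gap_pair_sum_lt : (0 < M)%N ->
  \sum_(0 <= i < M) \sum_(i.+1 <= j < M) ((q i - q j) ^+ 2 - a)^-1
    < (M.-1)%:R / (mu ^+ 2 - a) + 3 / 4 * M%:R / a.
Proof.
case: M q_gap inv_gap_row_sum_le => // n _ row_le _.
rewrite big_nat_recr //= [X in _ + X]big_geq // addr0.
apply: le_lt_trans (_ : \sum_(0 <= i < n) ((mu ^+ 2 - a)^-1 + 3 / 4 / a) < _).
  by apply: ler_sum_nat => i /andP [_ i_lt]; apply: row_le.
rewrite sumr_const_nat subn0 -[_ *+ n]mulr_natr -[n.+1%:R]natr1.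
have : 0 < a^-1 by rewrite invr_gt0.
lra.
Qed.

End SpacedSequence.

Lemma pairsum_nat (R : realFieldType) (n : nat) (f : 'I_n.+1 -> 'I_n.+1 -> R) :
  pairsum f = \sum_(0 <= i < n.+1) \sum_(i.+1 <= j < n.+1) f (inord i) (inord j).
Proof.
rewrite /pairsum big_mkord; apply: eq_bigr => i _.
rewrite big_geq_mkord; apply: eq_big => [j|j _]; first by rewrite andTb.
by rewrite !inord_val.
Qed.

Lemma pairsum_gt_term (R : realFieldType) (m : nat) (f : 'I_m -> 'I_m -> R)
    (i0 j0 : 'I_m) :
  (2 < m)%N -> (forall i j : 'I_m, (i < j)%N -> 0 < f i j) -> (i0 < j0)%N ->
  f i0 j0 < pairsum f.
Proof.
move=> m_gt2 f_gt0 ij0.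
pose o k (k_lt : (k < m)%N) := Ordinal k_lt.
pose x : 'I_m * 'I_m :=
  if (i0, j0) == (o 0 (ltnW (ltnW m_gt2)), o 1 (ltnW m_gt2))
  then (o 0 (ltnW (ltnW m_gt2)), o 2 m_gt2)
  else (o 0 (ltnW (ltnW m_gt2)), o 1 (ltnW m_gt2)).
have x_lt : (x.1 < x.2)%N by rewrite /x; case: ifP.
have x_neq : x != (i0, j0).
  by rewrite /x; case: ifP => [/eqP -> // | /negbT]; rewrite eq_sym.
rewrite /pairsum pair_big_dep (bigD1 (i0, j0)) ?ij0 //= ltrDl.
rewrite (bigD1 x) /= ?x_lt ?x_neq // ltr_pwDl ?f_gt0 //.
by apply: sumr_ge0 => y /andP [/andP [y_lt _] _]; rewrite ltW ?f_gt0.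
Qed.

Definition inv_gap_sum (R : realFieldType) (m : nat) (p : 'I_m -> R) (a : R) : R :=
  pairsum (fun i j => ((p i - p j) ^+ 2 - a)^-1).

Lemma muk2_0 (R : realFieldType) (m : nat) (p : 'I_m -> R) :
  muk2 p 0 = (inv_gap_sum p 0)^-1.
Proof.
rewrite /= /inv_gap_sum /pairsum; congr _^-1.
by apply: eq_bigr => i _; apply: eq_bigr => j _; rewrite subr0.
Qed.

Lemma muk2S (R : realFieldType) (m : nat) (p : 'I_m -> R) (k : nat) :
  muk2 p k.+1 = (inv_gap_sum p (muk2 p k))^-1 + muk2 p k.
Proof. by []. Qed.

Section IncreasingPoints.

Variables (R : realFieldType) (n : nat) (p : 'I_n.+1 -> R) (mu : R).
Hypothesis n_gt1 : (3 <= n.+1)%N.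
Hypothesis p_incr : forall i j : 'I_n.+1, (i < j)%N -> p i < p j.
Hypothesis mu_attained : exists i j : 'I_n.+1, i != j /\ mu = `|p i - p j|.
Hypothesis mu_min : forall i j : 'I_n.+1, i != j -> mu <= `|p i - p j|.

Lemma mu_attained_lt : exists i j : 'I_n.+1, (i < j)%N /\ mu = `|p i - p j|.
Proof.
have [i [j [ij ->]]] := mu_attained.
case: (ltngtP i j) => [lt_ij|lt_ji|/val_inj eq_ij].
- by exists i, j.
- by exists j, i; rewrite distrC.
- by rewrite eq_ij eqxx in ij.
Qed.

Lemma mu_gt0 : 0 < mu.
Proof.
have [i [j [ij ->]]] := mu_attained_lt.
by rewrite normr_gt0 subr_eq0 lt_eqF ?p_incr.
Qed.

Lemma inv_gap_sum_gt a : a < mu ^+ 2 -> (mu ^+ 2 - a)^-1 < inv_gap_sum p a.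
Proof.
move=> a_lt; have [i0 [j0 [ij0 mu_eq]]] := mu_attained_lt.
have -> : (mu ^+ 2 - a)^-1 = ((p i0 - p j0) ^+ 2 - a)^-1.
  by rewrite mu_eq real_normK ?num_real.
apply: pairsum_gt_term => // i j ij; rewrite invr_gt0 subr_gt0 (lt_le_trans a_lt) //.
rewrite -[(p i - p j) ^+ 2]real_normK ?num_real // ler_sqr ?nnegrE ?(ltW mu_gt0) //.
by rewrite mu_min // neq_ltn ij.
Qed.

Lemma inv_gap_sum_lt a : 0 < a -> a < mu ^+ 2 ->
  inv_gap_sum p a < n%:R / (mu ^+ 2 - a) + 3 / 4 * n.+1%:R / a.
Proof.
move=> a_gt0 a_lt; rewrite /inv_gap_sum pairsum_nat.
apply: (inv_gap_pair_sum_lt (q := fun k => p (inord k))) => // [|k k_lt].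
  exact: ltW mu_gt0.
have k_lt' : (k < n.+1)%N by apply: ltnW.
have lt_p : p (inord k) < p (inord k.+1) by apply: p_incr; rewrite !inordK.
rewrite -[X in _ <= X]gtr0_norm ?subr_gt0 // distrC mu_min //.
by rewrite -val_eqE /= !inordK // neq_ltn ltnSn.
Qed.

Lemma inv_gap_sum_inv_bounds a :
  a < mu ^+ 2 -> 0 < (inv_gap_sum p a)^-1 < mu ^+ 2 - a.
Proof.
move=> a_lt; have S_gt := inv_gap_sum_gt a_lt.
have c_gt0 : 0 < mu ^+ 2 - a by rewrite subr_gt0.
have S_gt0 : 0 < inv_gap_sum p a by apply: lt_trans S_gt; rewrite invr_gt0.
by rewrite invr_gt0 S_gt0 invf_plt ?posrE.
Qed.

Lemma muk2_bounds k : 0 < muk2 p k < mu ^+ 2.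
Proof.
elim: k => [|k /andP [a_gt0 a_lt]].
  by rewrite muk2_0 -[mu ^+ 2]subr0 inv_gap_sum_inv_bounds // exprn_gt0 ?mu_gt0.
have /andP [c_gt0 c_lt] := inv_gap_sum_inv_bounds a_lt.
by rewrite muk2S; apply/andP; split; lra.
Qed.

End IncreasingPoints.

Theorem mainTheorem8 (R : realFieldType) (m : nat) (p : 'I_m -> R) (mu : R)
  (hm : (3 <= m)%N)
  (hinc : forall i j : 'I_m, (i < j)%N -> p i < p j)
  (hmu_att : exists i j : 'I_m, i != j /\ mu = `|p i - p j|)
  (hmu_min : forall i j : 'I_m, i != j -> mu <= `|p i - p j|) :
  forall k : nat,
    0 < ((m.-1)%:R / (mu ^+ 2 / muk2 p k - 1) + 3 / 4 * m%:R)^-1 /\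
    ((m.-1)%:R / (mu ^+ 2 / muk2 p k - 1) + 3 / 4 * m%:R)^-1
      < muk2 p k.+1 / muk2 p k - 1 /\
    muk2 p k.+1 / muk2 p k - 1 < mu ^+ 2 / muk2 p k - 1.
Proof.
case: m p hm hinc hmu_att hmu_min => [|n] // p hm hinc hmu_att hmu_min k.
have /andP [a_gt0 a_lt] := muk2_bounds hm hinc hmu_att hmu_min k.
rewrite muk2S; apply: ratio_bounds => //.
- by rewrite !mulr_gt0 ?invr_gt0 ?ltr0n.
- exact: inv_gap_sum_gt.
- exact: inv_gap_sum_lt.
Qed.
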